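(* Let $(X,r)$ be a non-degenerate involutive set-theoretic solution with $|X|=n$, identified with $\{1,\dots,n\}$, and let $(\mathcal{X}^2,\tilde r)$ be the induced pair. Then: (i) if $(X,r)$ is irretractable, then $(\mathcal{X}^2,\tilde r)$ is irretractable; (ii) if $(X,r)$ is a multipermutation solution of level $\ell$, then $(\mathcal{X}^2,\tilde r)$ is a multipermutation solution of level $\ell$; (iii) if $(X,r)$ is decomposable, then $(\mathcal{X}^2,\tilde r)$ is decomposable.
   Context: A set-theoretic solution is $r:X\times X\to X\times X$, $r(x,y)=(\sigma_x(y),\gamma_y(x))$, with $r^{12}r^{23}r^{12}=r^{23}r^{12}r^{23}$ ($r^{12}=r\times\mathrm{Id}_X$, $r^{23}=\mathrm{Id}_X\times r$); non-degenerate: all $\sigma_x,\gamma_x$ bijective; involutive: $r\circ r=\mathrm{Id}$. Induced pair: $\mathcal{X}^2=\{T_i^k:1\le i,k\le n\}$ ($n^2$ symbols), $\tilde r(T_i^k,T_j^l)=(T_{\sigma_i(j)}^{\sigma_k(l)},T_{\gamma_j(i)}^{\gamma_l(k)})$, a non-degenerate involutive solution with maps $g_i^k(T_j^l)=T_{\sigma_i(j)}^{\sigma_k(l)}$ in the role of $\sigma$. Retraction: $x\sim y$ iff $\sigma_x=\sigma_y$; $\mathrm{Ret}(X,r)=(X/\!\sim,r')$ with $r'([x],[y])=([\sigma_x(y)],[\gamma_y(x)])$, $\mathrm{Ret}^k=\mathrm{Ret}(\mathrm{Ret}^{k-1})$. $(X,r)$ is a multipermutation solution of level $\ell$ if $\ell$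 is the smallest natural number with $|\mathrm{Ret}^\ell(X,r)|=1$; irretractable if no such $\ell$ exists. A subset $Y$ is non-degenerate invariant if $r(Y\times Y)\subseteq Y\times Y$ and $(Y,r|_{Y^2})$ is a non-degenerate involutive solution; $(X,r)$ is decomposable if $X$ is a union of two non-empty disjoint non-degenerate invariant subsets. *)

From mathcomp Require Import all_boot.
Set Implicit Arguments. Unset Strict Implicit. Unset Printing Implicit Defensive.

(* A "pair" (X, r) on a finite set X, given by the two families of maps:
   sg x y = sigma_x(y),  gm y x = gamma_y(x),
   so that r(x,y) = (sg x y, gm y x). *)
Record sol := Sol {
  car :> finType;
  sg : car -> car -> car;
  gm : car -> car -> car }.

Definition rmap (S : sol) (p : S * S) : S * S :=
  (sg p.1 p.2, gm p.2 p.1).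

Definition r12 (S : sol) (t : S * S * S) : S * S * S :=
  let: (x, y, z) := t in let: (a, b) := rmap (x, y) in (a, b, z).
Definition r23 (S : sol) (t : S * S * S) : S * S * S :=
  let: (x, y, z) := t in let: (b, c) := rmap (y, z) in (x, b, c).

Definition braid (S : sol) : Prop :=
  forall t : S * S * S, r12 (r23 (r12 t)) = r23 (r12 (r23 t)).
Definition nondegenerate (S : sol) : Prop :=
  forall x : S, bijective (sg x) /\ bijective (gm x).
Definition involutive (S : sol) : Prop :=
  forall p : S * S, rmap (rmap p) = p.

Definition ndi_solution (S : sol) : Prop :=
  braid S /\ nondegenerate S /\ involutive S.

Definition cls (S : sol) (x : S) : {set S} :=
  [set y | [forall z, sg y z == sg x z]].

Definition is_cls (S : sol) (A : {set S}) : bool := [exists x, A == cls x].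

Definition retT (S : sol) : finType := {A : {set S} | is_cls A}.

Definition clsR (S : sol) (x : S) : retT S :=
  exist (fun A => is_cls A) (cls x) (introT (@existsP _ (fun y => cls x == cls y)) (ex_intro _ x (eqxx _))).

Definition rep (S : sol) (A : retT S) : S := xchoose (existsP (valP A)).

Definition ret (S : sol) : sol :=
  @Sol (retT S)
    (fun A B => clsR (sg (rep A) (rep B)))
    (fun B A => clsR (gm (rep B) (rep A))).

Definition Ret_iter (k : nat) (S : sol) : sol := iter k ret S.

Definition multipermutation_level (S : sol) (l : nat) : Prop :=
  #|car (Ret_iter l S)| = 1 /\ (forall k, k < l -> #|car (Ret_iter k S)| <> 1).

Definition irretractable (S : sol) : Prop :=
  forall k, #|car (Ret_iter k S)| <> 1.

Definition nd_invariant (S : sol) (Y : {set S}) : Prop :=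
  (forall x y, x \in Y -> y \in Y -> sg x y \in Y /\ gm y x \in Y) /\
  (forall x, x \in Y -> forall z, z \in Y ->
     (exists y, y \in Y /\ sg x y = z /\ (forall y', y' \in Y -> sg x y' = z -> y' = y)) /\
     (exists y, y \in Y /\ gm x y = z /\ (forall y', y' \in Y -> gm x y' = z -> y' = y))) /\
  (forall x y z, x \in Y -> y \in Y -> z \in Y ->
     r12 (r23 (r12 (x, y, z))) = r23 (r12 (r23 (x, y, z)))) /\
  (forall x y, x \in Y -> y \in Y -> rmap (rmap (x, y)) = (x, y)).

Definition decomposable (S : sol) : Prop :=
  exists Y Z : {set S},
    [/\ Y != set0, Z != set0, [disjoint Y & Z], Y :|: Z = setT &
        nd_invariant Y /\ nd_invariant Z].

(* T_i^k is encoded as (i, k) : X * X;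
   r~(T_i^k, T_j^l) = (T_{sigma_i(j)}^{sigma_k(l)}, T_{gamma_j(i)}^{gamma_l(k)}) *)
Definition induced (S : sol) : sol :=
  @Sol (S * S)%type
    (fun p q => (sg p.1 q.1, sg p.2 q.2))
    (fun q p => (gm q.1 p.1, gm q.2 p.2)).

From mathcomp Require Import all_boot.

Set Implicit Arguments. Unset Strict Implicit. Unset Printing Implicit Defensive.

(* The induced pair is the direct product of (X, r) with itself.  Retraction
   only sees the maps sigma, and whenever these satisfy the cycle law
   sigma_x sigma_y = sigma_(sigma_x y) sigma_t with sigma_(sigma_x y) t = x
   (t = gamma_y x for a non-degenerate involutive solution), the retraction of
   a product is isomorphic, as a sigma-structure, to the product of the
   retractions.  Hence Ret^k of the induced pair is Ret^k(X) x Ret^k(X), which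
   is a singleton exactly when Ret^k(X) is.  A decomposition X = Y u Z lifts
   to the decomposition (Y x X) u (Z x X) of the induced pair. *)

Definition sim (S : sol) (x y : S) := sg x =1 sg y.

Definition cycle_law (S : sol) : Prop :=
  (forall x : S, injective (sg x)) /\
  forall x y : S, exists2 t, sg (sg x y) t = x &
    forall z, sg x (sg y z) = sg (sg x y) (sg t z).

Lemma ndi_cycle_law (S : sol) : ndi_solution S -> cycle_law S.
Proof.
case=> braidS [ndS invS]; split=> [x | x y]; first by case: (ndS x) => /bij_inj.
exists (gm y x); first exact: (congr1 fst (invS (x, y))).
by move=> z; have := congr1 (fun t => t.1.1) (braidS (x, y, z)).
Qed.

Section Retraction.

Variable S : sol.

Lemma cls_eq (x y : S) : cls x = cls y <-> sim x y.
Proof.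
split=> [eq_xy z | sim_xy].
  have : x \in cls y by rewrite -eq_xy inE; apply/forallP.
  by rewrite inE => /forallP /(_ z) /eqP.
by apply/setP => w; rewrite !inE; apply/forallP/forallP => eq_w z;
  rewrite ?sim_xy // -sim_xy.
Qed.

Lemma clsR_eq (x y : S) : clsR x = clsR y <-> sim x y.
Proof.
split=> [/(congr1 val)/cls_eq // | /cls_eq eq_cls].
by apply: val_inj.
Qed.

Lemma clsR_rep (A : retT S) : clsR (rep A) = A.
Proof.
by apply: val_inj; apply/esym/eqP; exact: (xchooseP (existsP (valP A))).
Qed.

Lemma clsR_surj (A : retT S) : exists x, A = clsR x.
Proof. by exists (rep A); rewrite clsR_rep. Qed.

Lemma rep_clsR (x : S) : sim (rep (clsR x)) x.
Proof. by apply/clsR_eq; rewrite clsR_rep. Qed.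

Hypothesis lawS : cycle_law S.

Lemma sim_sg_cancel (x a b : S) : sim (sg x a) (sg x b) -> sim a b.
Proof.
case: lawS => sg_inj cycle sim_xab z.
have [t ta cycle_a] := cycle x a; have [u ub cycle_b] := cycle x b.
have eq_tu : t = u by apply: (sg_inj (sg x a)); rewrite ta sim_xab ub.
by apply: (sg_inj x); rewrite cycle_a cycle_b eq_tu sim_xab.
Qed.

(* sigma_x x sigma_x is a permutation of S x S whose preimage of the graph of
   [sim] is contained in that graph by [sim_sg_cancel]; being finite and of
   the same size, the two sets coincide. *)
Lemma sim_sg (x a b : S) : sim a b -> sim (sg x a) (sg x b).
Proof.
pose E := [set p : S * S | cls p.1 == cls p.2].
pose f p := (sg x p.1, sg x p.2).
have f_inj : injective f.
  by case: lawS => sg_inj _ [? ?] [? ?] [/sg_inj -> /sg_inj ->].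
have fE_sub : f @^-1: E \subset E.
  by apply/subsetP => p; rewrite !inE => /eqP/cls_eq/sim_sg_cancel/cls_eq ->.
have fE_eq : f @^-1: E =i E by apply/(subset_cardP (card_preimset E f_inj)).
move=> /cls_eq/eqP sim_ab; apply/cls_eq/eqP.
have : (a, b) \in E by rewrite inE.
by rewrite -fE_eq !inE.
Qed.

Lemma sg_clsR (a b : S) : sg (clsR a : ret S) (clsR b) = clsR (sg a b).
Proof.
by apply/clsR_eq => z /=; rewrite (rep_clsR a); apply: sim_sg; apply: rep_clsR.
Qed.

Lemma cycle_law_ret : cycle_law (ret S).
Proof.
split=> [A B C | A B].
  have [a ->] := clsR_surj A; have [b ->] := clsR_surj B.
  have [c ->] := clsR_surj C.
  by rewrite !sg_clsR => /clsR_eq/sim_sg_cancel/clsR_eq.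
have [a ->] := clsR_surj A; have [b ->] := clsR_surj B.
have [t ta cycle_ab] := lawS.2 a b.
exists (clsR t); first by rewrite !sg_clsR ta.
by move=> C; have [c ->] := clsR_surj C; rewrite !sg_clsR cycle_ab.
Qed.

End Retraction.

Lemma cycle_law_Ret_iter (S : sol) k : cycle_law S -> cycle_law (Ret_iter k S).
Proof. by move=> lawS; elim: k => //= k; apply: cycle_law_ret. Qed.

Definition sg_iso (S T : sol) : Prop :=
  exists2 f : S -> T, bijective f & {morph f : x y / sg x y}.

Lemma sg_iso_trans (S T U : sol) : sg_iso S T -> sg_iso T U -> sg_iso S U.
Proof.
case=> f f_bij f_sg [g g_bij g_sg]; exists (g \o f); first exact: bij_comp.
by move=> x y /=; rewrite f_sg g_sg.
Qed.

Lemma sg_iso_card (S T : sol) : sg_iso S T -> #|S| = #|T|.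
Proof. by case=> f /bij_eq_card. Qed.

Lemma sim_morph (S T : sol) (f : S -> T) (g : T -> S) :
  cancel g f -> {morph f : x y / sg x y} -> {homo f : x y / sim x y}.
Proof. by move=> gK f_sg x y sim_xy w; rewrite -(gK w) -!f_sg sim_xy. Qed.

Lemma sg_iso_ret (S T : sol) :
  cycle_law S -> cycle_law T -> sg_iso S T -> sg_iso (ret S) (ret T).
Proof.
move=> lawS lawT [f [g fK gK] f_sg].
have g_sg : {morph g : u v / sg u v}.
  by move=> u v; apply: (can_inj fK); rewrite f_sg !gK.
pose F (A : ret S) : ret T := clsR (f (rep A)).
pose G (B : ret T) : ret S := clsR (g (rep B)).
have F_clsR x : F (clsR x) = clsR (f x).
  by apply/clsR_eq; apply: (sim_morph gK f_sg); apply: rep_clsR.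
have G_clsR y : G (clsR y) = clsR (g y).
  by apply/clsR_eq; apply: (sim_morph fK g_sg); apply: rep_clsR.
exists F.
  exists G => [A | B].
    by have [a ->] := clsR_surj A; rewrite F_clsR G_clsR fK.
  by have [b ->] := clsR_surj B; rewrite G_clsR F_clsR gK.
move=> A B; have [a ->] := clsR_surj A; have [b ->] := clsR_surj B.
by rewrite (sg_clsR lawS) !F_clsR f_sg (sg_clsR lawT).
Qed.

Definition prod_sol (S T : sol) : sol :=
  @Sol (S * T)%type (fun p q => (sg p.1 q.1, sg p.2 q.2))
                    (fun q p => (gm q.1 p.1, gm q.2 p.2)).

Section Product.

Variables S T : sol.

Lemma sim_prod (p q : prod_sol S T) :
  sim p q <-> sim p.1 q.1 /\ sim p.2 q.2.
Proof.
split=> [sim_pq | [sim1 sim2] z /=]; last by rewrite sim1 sim2.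
split=> z; first exact: (congr1 fst (sim_pq (z, p.2))).
exact: (congr1 snd (sim_pq (p.1, z))).
Qed.

Lemma cycle_law_prod : cycle_law S -> cycle_law T -> cycle_law (prod_sol S T).
Proof.
move=> [inj1 cycle1] [inj2 cycle2]; split.
  by move=> x [a1 a2] [b1 b2] [/inj1 -> /inj2 ->].
move=> [x1 x2] [y1 y2].
have [t1 eq_t1 cycle_t1] := cycle1 x1 y1.
have [t2 eq_t2 cycle_t2] := cycle2 x2 y2.
exists (t1, t2); first by rewrite /= eq_t1 eq_t2.
by move=> [z1 z2]; rewrite /= cycle_t1 cycle_t2.
Qed.

Lemma ret_prod_iso : cycle_law S -> cycle_law T ->
  sg_iso (ret (prod_sol S T)) (prod_sol (ret S) (ret T)).
Proof.
move=> lawS lawT; have lawST := cycle_law_prod lawS lawT.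
pose F (A : ret (prod_sol S T)) : prod_sol (ret S) (ret T) :=
  (clsR (rep A).1, clsR (rep A).2).
pose G (C : prod_sol (ret S) (ret T)) : ret (prod_sol S T) :=
  clsR ((rep C.1, rep C.2) : prod_sol S T).
have F_clsR p : F (clsR p) = (clsR p.1, clsR p.2).
  by have /sim_prod [sim1 sim2] := rep_clsR p; congr pair; apply/clsR_eq.
have G_clsR a b : G (clsR a, clsR b) = clsR ((a, b) : prod_sol S T).
  by apply/clsR_eq/sim_prod; split; apply: rep_clsR.
exists F.
  exists G => [A | [C D]].
    by have [[a b] ->] := clsR_surj A; rewrite F_clsR G_clsR.
  have [c ->] := clsR_surj C; have [d ->] := clsR_surj D.
  by rewrite G_clsR F_clsR.
move=> A B; have [p ->] := clsR_surj A; have [q ->] := clsR_surj B.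
rewrite (sg_clsR lawST) !F_clsR.
by congr pair; apply/esym/sg_clsR.
Qed.

End Product.

Lemma Ret_iter_prod_iso (S T : sol) k : cycle_law S -> cycle_law T ->
  sg_iso (Ret_iter k (prod_sol S T)) (prod_sol (Ret_iter k S) (Ret_iter k T)).
Proof.
move=> lawS lawT; elim: k => [|k IHk]; first by exists id => //; exists id.
have lawSk := cycle_law_Ret_iter k lawS.
have lawTk := cycle_law_Ret_iter k lawT.
apply: sg_iso_trans (ret_prod_iso lawSk lawTk).
apply: sg_iso_ret IHk; last exact: cycle_law_prod.
exact: cycle_law_Ret_iter (cycle_law_prod lawS lawT).
Qed.

Lemma card_Ret_iter_induced (S : sol) k : ndi_solution S ->
  #|Ret_iter k (induced S)| = #|Ret_iter k S| ^ 2.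
Proof.
move=> /ndi_cycle_law lawS.
by rewrite (sg_iso_card (Ret_iter_prod_iso k lawS lawS)) card_prod.
Qed.

Lemma card_Ret_iter_induced_eq1 (S : sol) k : ndi_solution S ->
  #|Ret_iter k (induced S)| = 1 <-> #|Ret_iter k S| = 1.
Proof.
move=> ndiS; rewrite card_Ret_iter_induced //.
by split=> [/eqP | -> //]; rewrite muln_eq1 andbb => /eqP.
Qed.

Definition unique_preimage_in (A B : finType) (Y : {set A}) (f : A -> B) z :=
  exists y, y \in Y /\ f y = z /\ forall y', y' \in Y -> f y' = z -> y' = y.

Lemma unique_preimage_bij (A B : finType) (f : A -> B) z :
  bijective f -> unique_preimage_in [set: A] f z.
Proof.
case=> g fK gK; exists (g z); rewrite in_setT gK.
by split=> //; split=> // y _ <-; rewrite fK.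
Qed.

Lemma unique_preimage_setX (A1 A2 B1 B2 : finType)
    (Y1 : {set A1}) (Y2 : {set A2}) (f1 : A1 -> B1) (f2 : A2 -> B2) z1 z2 :
  unique_preimage_in Y1 f1 z1 -> unique_preimage_in Y2 f2 z2 ->
  unique_preimage_in (setX Y1 Y2) (fun y => (f1 y.1, f2 y.2)) (z1, z2).
Proof.
move=> [y1 [Yy1 [f_y1 y1_uniq]]] [y2 [Yy2 [f_y2 y2_uniq]]].
exists (y1, y2); rewrite in_setX Yy1 Yy2 f_y1 f_y2.
split=> //; split=> // -[y1' y2'].
by rewrite in_setX => /andP[Yy1' Yy2'] [/y1_uniq -> // /y2_uniq ->].
Qed.

Lemma nd_invariant_setT (S : sol) : ndi_solution S -> nd_invariant [set: S].
Proof.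
case=> braidS [ndS invS]; split; last split; last split.
- by move=> x y; rewrite !in_setT.
- move=> x _ z _; case: (ndS x) => sg_bij gm_bij.
  by split; apply: unique_preimage_bij.
- by move=> x y z _ _ _; apply: braidS.
- by move=> x y _ _; apply: invS.
Qed.

Lemma nd_invariant_setX (S T : sol) (Y : {set S}) (Z : {set T}) :
  nd_invariant Y -> nd_invariant Z -> @nd_invariant (prod_sol S T) (setX Y Z).
Proof.
move=> [clY [bijY [braidY invY]]] [clZ [bijZ [braidZ invZ]]].
split; last split; last split.
- move=> [x1 x2] [y1 y2] /setXP[Yx1 Zx2] /setXP[Yy1 Zy2].
  have [? ?] := clY _ _ Yx1 Yy1; have [? ?] := clZ _ _ Zx2 Zy2.
  by rewrite !in_setX; split; apply/andP.
- move=> [x1 x2] /setXP[Yx1 Zx2] [z1 z2] /setXP[Yz1 Zz2].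
  have [sgY gmY] := bijY _ Yx1 _ Yz1; have [sgZ gmZ] := bijZ _ Zx2 _ Zz2.
  by split; apply: unique_preimage_setX.
- move=> [x1 x2] [y1 y2] [z1 z2].
  move=> /setXP[Yx1 Zx2] /setXP[Yy1 Zy2] /setXP[Yz1 Zz2].
  move: (braidY _ _ _ Yx1 Yy1 Yz1) (braidZ _ _ _ Zx2 Zy2 Zz2).
  by rewrite /r12 /r23 /rmap /= => -[-> -> ->] [-> -> ->].
- move=> [x1 x2] [y1 y2] /setXP[Yx1 Zx2] /setXP[Yy1 Zy2].
  move: (invY _ _ Yx1 Yy1) (invZ _ _ Zx2 Zy2).
  by rewrite /rmap /= => -[-> ->] [-> ->].
Qed.

Lemma decomposable_prod (S T : sol) (t : T) :
  decomposable S -> ndi_solution T -> decomposable (prod_sol S T).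
Proof.
move=> [Y [Z [Y_n0 Z_n0 YZ_disj YZ_cover [invY invZ]]]] ndiT.
have [[y Yy] [z Zz]] := (set0Pn _ Y_n0, set0Pn _ Z_n0).
exists (setX Y [set: T]), (setX Z [set: T]); split.
- by apply/set0Pn; exists (y, t); rewrite in_setX Yy in_setT.
- by apply/set0Pn; exists (z, t); rewrite in_setX Zz in_setT.
- rewrite disjoints_subset; apply/subsetP => -[p1 p2].
  by rewrite !inE /= !andbT => /(disjointFr YZ_disj) ->.
- apply/setP => -[p1 p2]; have := in_setT p1.
  by rewrite -YZ_cover !inE /= !andbT.
- by split; apply: nd_invariant_setX => //; apply: nd_invariant_setT.
Qed.

Theorem lemma3p10 (S : sol) :
  ndi_solution S ->
  [/\ (irretractable S -> irretractable (induced S)),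
      (forall l : nat, multipermutation_level S l ->
                       multipermutation_level (induced S) l)
    & (decomposable S -> decomposable (induced S))].
Proof.
move=> ndiS; split.
- by move=> irrS k /(card_Ret_iter_induced_eq1 k ndiS); apply: irrS.
- move=> l [Ret_l_1 Ret_lt_l]; split.
    exact/(card_Ret_iter_induced_eq1 l ndiS).
  by move=> k lt_kl /(card_Ret_iter_induced_eq1 k ndiS); apply: Ret_lt_l.
- move=> decS; have [Y [Z [/set0Pn[x _] _ _ _ _]]] := decS.
  exact: decomposable_prod x decS ndiS.
Qed.
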